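(* Let $\mathcal{F}$ be a family of $n$ pseudo-parabolas in the plane and let $k$ be a positive integer. Then the number of intersection points of two curves in $\mathcal{F}$ that lie strictly above at most $k-2$ other curves in $\mathcal{F}$ is at most $2(k-1)n$.
   Context: A family of pseudo-parabolas is a family of bi-infinite $x$-monotone curves in the plane (graphs of continuous functions defined on all of $\mathbb{R}$), every two of which intersect in at most two points. *)

From HB Require Import structures.
From mathcomp Require Import all_boot all_order all_algebra.
From mathcomp Require Import all_classical all_reals topology normedtype.
Set Implicit Arguments. Unset Strict Implicit. Unset Printing Implicit Defensive.
Import Order.TTheory GRing.Theory Num.Theory numFieldNormedType.Exports.
Local Open Scope ring_scope.

(* A family of n pseudo-parabolas: n graphs of continuous functions R -> R,
   every two distinct members meeting in at most two points
   (a point of intersection of the graphs of f i and f j is determined by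
   its abscissa x with f i x = f j x). *)
Definition pseudo_parabola_family (R : realType) (n : nat) (f : 'I_n -> R -> R) :=
  (forall i, continuous (f i)) /\
  (forall i j : 'I_n, i != j ->
     forall s : seq R, uniq s -> (forall x, x \in s -> f i x = f j x) ->
     (size s <= 2)%N).

Definition is_intersection_point (R : realType) (n : nat) (f : 'I_n -> R -> R)
  (p : R * R) : Prop :=
  exists i j : 'I_n, i != j /\ f i p.1 = p.2 /\ f j p.1 = p.2.

Definition nb_below (R : realType) (n : nat) (f : 'I_n -> R -> R) (p : R * R) : nat :=
  #|[pred j : 'I_n | f j p.1 < p.2]|.

(* At an intersection point p of two pseudo-parabolas, the curves meet at most
   once more, so on one side of p (left or right) they do not meet at all and,
   by the intermediate value theorem, one of them (the lower curve W) stays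
   strictly below the other (the upper curve X) on that whole side.  Charge p
   to the pair (X, side).  Among the points charged to (X, b), which all lie on
   X, take the one farthest in direction b: every other charged point q has its
   lower curve W q passing strictly below it, and distinct q give distinct W q.
   So a class has at most (k - 2) + 1 points, and there are 2n classes. *)

From mathcomp Require Import all_boot all_order all_algebra.
From mathcomp Require Import all_classical all_reals topology normedtype.
From mathcomp Require Import zify.
Import Order.TTheory GRing.Theory Num.Theory numFieldNormedType.Exports.
Local Open Scope classical_set_scope.
Local Open Scope ring_scope.

Lemma exists_argmax {T : eqType} {disp : Order.disp_t} {O : orderType disp}
    (key : T -> O) (s : seq T) :
  s != [::] -> exists2 x, x \in s & forall y, y \in s -> (key y <= key x)%O.
Proof.
elim: s => [//|a [|b s] IH] _.
  by exists a; rewrite ?mem_head // => y; rewrite inE => /eqP->.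
have [x xs xmax] := IH isT.
have [ax|xa] := leP (key a) (key x).
  by exists x => [|y]; rewrite inE ?xs ?orbT // => /predU1P[->|/xmax].
exists a => [|y]; first exact: mem_head.
by rewrite inE => /predU1P[->//|/xmax/le_trans]; apply; exact: ltW.
Qed.

Lemma interval_IVT (R : realType) (g : R -> R) (E : set R) :
  is_interval E -> {within E, continuous g} ->
  forall u z, E u -> E z -> g u < 0 -> 0 < g z -> exists2 c, E c & g c = 0.
Proof.
move=> iE cg u z Eu Ez gu gz.
have igE : is_interval (g @` E).
  exact/connected_intervalP/connected_continuous_connected/cg/connected_intervalP.
have [c Ec gc] : (g @` E) 0.
  by apply: (igE (g u) (g z)); [exists u | exists z | rewrite !ltW].
by exists c.
Qed.

Arguments interval_IVT {R g E} _ _ {u z}.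

Section Directions.
Context {R : realType}.

Definition dir (b : bool) (x : R) : R := if b then - x else x.

Definition beyond (b : bool) (x z : R) : bool := dir b x < dir b z.

Lemma beyond_interval b x : is_interval [set z | beyond b x z].
Proof.
rewrite /beyond; case: b => u v /= hu hv z /andP[uz zv].
- by apply: lt_le_trans hv _; rewrite lerN2.
- exact: lt_le_trans hu uz.
Qed.

Lemma beyond_total b x z : x != z -> beyond b x z || beyond b z x.
Proof. by move=> xz; apply: lt_total; case: b; rewrite //= eqr_opp. Qed.

Lemma dir_inj b : injective (dir b).
Proof. by case: b => //; exact: oppr_inj. Qed.

Lemma beyond_shift b x : beyond b x (x + dir b 1).
Proof. by rewrite /beyond; case: b => /=; rewrite ?opprD ?opprK ltrDl. Qed.

Lemma continuous_sign_beyond (d : R -> R) b x : continuous d ->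
  (forall z, beyond b x z -> d z != 0) ->
  (forall z, beyond b x z -> d z < 0) \/ (forall z, beyond b x z -> 0 < d z).
Proof.
move=> cd d0; have cdE := continuous_subspaceT (A := [set z | beyond b x z]) cd.
have iE : is_interval [set z | beyond b x z] := beyond_interval b x.
have xu : beyond b x (x + dir b 1) := beyond_shift b x.
have no_root c : beyond b x c -> d c = 0 -> False by move=> /d0 /[swap] ->; rewrite eqxx.
have [du|du|du] := ltgtP (d (x + dir b 1)) 0; last by case: (no_root _ xu du).
- left=> z xz; rewrite ltNge le_eqVlt eq_sym (negbTE (d0 z xz)) /=; apply/negP => dz.
  by have [c xc /no_root] := interval_IVT iE cdE xu xz du dz; apply.
- right=> z xz; rewrite ltNge le_eqVlt (negbTE (d0 z xz)) /=; apply/negP => dz.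
  by have [c xc /no_root] := interval_IVT iE cdE xz xu dz du; apply.
Qed.

End Directions.

Arguments continuous_sign_beyond {R d b x}.

Section TwoCurves.
Context {R : realType} {g h : R -> R}.
Hypothesis meet_at_most_twice :
  forall s : seq R, uniq s -> (forall y, y \in s -> g y = h y) -> (size s <= 2)%N.

Lemma meet_avoid_one_side x : g x = h x ->
  exists b, forall z, beyond b x z -> g z != h z.
Proof.
move=> gxhx; have [[z1 [z1x gz1]]|no_left] := pselect (exists z, z < x /\ g z = h z).
  exists false => z2 /= xz2; apply/eqP => gz2.
  suff : (size [:: z1; x; z2] <= 2)%N by [].
  apply: meet_at_most_twice => [|y].
    by rewrite /= !inE negb_or (lt_eqF z1x) (lt_eqF (lt_trans z1x xz2)) (lt_eqF xz2).
  by rewrite !inE => /or3P[]/eqP->.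
by exists true => z; rewrite /beyond ltrN2 => zx; apply/eqP => gz; apply: no_left; exists z.
Qed.

Hypotheses (cg : continuous g) (ch : continuous h).

Lemma separated_on_one_side x : g x = h x ->
  exists b, (forall z, beyond b x z -> g z < h z) \/ (forall z, beyond b x z -> h z < g z).
Proof.
move=> /meet_avoid_one_side [b gh]; exists b.
have cgh : continuous (fun t => g t - h t) by move=> t; exact: continuousB (cg t) (ch t).
have gh0 z : beyond b x z -> g z - h z != 0 by rewrite subr_eq0; exact: gh.
have [lt_gh|lt_hg] := continuous_sign_beyond cgh gh0.
- by left=> z /lt_gh; rewrite subr_lt0.
- by right=> z /lt_hg; rewrite subr_gt0.
Qed.

End TwoCurves.

Definition separated_at {R : realType} {n : nat} (f : 'I_n -> R -> R)
    (W X : 'I_n) (b : bool) (p : R * R) : Prop :=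
  [/\ f W p.1 = p.2, f X p.1 = p.2 & forall z, beyond b p.1 z -> f W z < f X z].

Section PseudoParabolas.
Context {R : realType} {n : nat} {f : 'I_n -> R -> R}.

Lemma intersection_point_separated p :
  pseudo_parabola_family f -> is_intersection_point f p ->
  exists (W X : 'I_n) (b : bool), separated_at f W X b p.
Proof.
move=> [cf meet2] [i [j [ij [fi fj]]]].
have fij : f i p.1 = f j p.1 by rewrite fi fj.
have [b [ij_below|ji_below]] := separated_on_one_side (meet2 i j ij) (cf i) (cf j) _ fij.
- by exists i, j, b.
- by exists j, i, b.
Qed.

Lemma size_le_nb_below_extreme (W : R * R -> 'I_n) (X : 'I_n) (b : bool)
    (P : seq (R * R)) :
  uniq P -> P != [::] -> (forall p, p \in P -> separated_at f (W p) X b p) ->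
  exists2 p0, p0 \in P & (size P <= (nb_below f p0).+1)%N.
Proof.
move=> uP nP sepP.
have onX p : p \in P -> f X p.1 = p.2 by case/sepP.
have belowX p q : p \in P -> q \in P -> beyond b q.1 p.1 -> f (W q) p.1 < f X p.1.
  by move=> pP /sepP[_ _ below] /below; rewrite (onX p pP).
have [p0 p0P p0max] := exists_argmax (fun p : R * R => dir b p.1) P nP.
have absc_inj : {in P &, injective fst}.
  by move=> [x y] [x' y'] /onX /= <- /onX /= <- /= ->.
pose Q := rem p0 P.
have beyond_p0 q : q \in Q -> q \in P /\ beyond b q.1 p0.1.
  rewrite /Q (rem_filter _ uP) mem_filter /= => /andP[qp0 qP]; split=> //.
  rewrite /beyond lt_neqAle p0max // andbT (inj_eq (@dir_inj _ b)).
  by apply: contraNneq qp0 => /absc_inj ->.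
have W_inj : {in Q &, injective W}.
  move=> q q' /beyond_p0[qP _] /beyond_p0[q'P _] Wqq'; apply: absc_inj => //.
  apply/eqP; apply: contraT => /(beyond_total b) /orP[] qq'.
  - by have := belowX q' q q'P qP qq'; rewrite Wqq'; have [-> -> _] := sepP q' q'P; rewrite ltxx.
  - by have := belowX q q' qP q'P qq'; rewrite -Wqq'; have [-> -> _] := sepP q qP; rewrite ltxx.
have W_below : {subset map W Q <= enum [pred j | f j p0.1 < p0.2]}.
  move=> _ /mapP[q /beyond_p0[qP qp0] ->]; rewrite mem_enum inE.
  by rewrite -(onX p0 p0P); exact: belowX.
exists p0 => //.
have uWQ : uniq (map W Q) by rewrite (map_inj_in_uniq W_inj) rem_uniq.
have := uniq_leq_size uWQ W_below.
by rewrite size_map -cardE size_rem // -ltnS prednK // lt0n size_eq0.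
Qed.

Lemma count_class_le (k : nat) (W : R * R -> 'I_n) (cls : R * R -> 'I_n * bool)
    (s : seq (R * R)) (c : 'I_n * bool) :
  (0 < k)%N -> uniq s ->
  (forall p, p \in s -> separated_at f (W p) (cls p).1 (cls p).2 p) ->
  (forall p, p \in s -> nb_below f p + 2 <= k)%N ->
  (count (fun p => cls p == c) s <= k - 1)%N.
Proof.
move=> k_gt0 us sep_s below_s; rewrite -size_filter; set P := [seq p <- s | _].
have [->//|nP] := eqVneq P [::].
have inP p : p \in P -> p \in s /\ cls p = c.
  by rewrite mem_filter => /andP[/eqP-> ps].
have sepP p : p \in P -> separated_at f (W p) c.1 c.2 p.
  by case/inP => ps <-; exact: sep_s.
have uP : uniq P by rewrite filter_uniq.
have [q qP sizeP] := size_le_nb_below_extreme W c.1 c.2 P uP nP sepP.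
apply: leq_trans sizeP _; rewrite leq_subRL // add1n -addn2.
exact: below_s (inP q qP).1.
Qed.

End PseudoParabolas.

Theorem theorem4 (R : realType) (n k : nat) (f : 'I_n -> R -> R) :
  pseudo_parabola_family f -> (0 < k)%N ->
  forall s : seq (R * R), uniq s ->
  (forall p, p \in s -> is_intersection_point f p /\ (nb_below f p + 2 <= k)%N) ->
  (size s <= 2 * (k - 1) * n)%N.
Proof.
move=> fam k_gt0 s us hs.
have [->//|/eqP s0] := eqVneq s [::].
have [i0 _] : exists i0 : 'I_n, True.
  by case: s s0 hs {us} => [//|p s' _ /(_ p (mem_head _ _)) [[i _] _]]; exists i.
have label p : exists t : 'I_n * ('I_n * bool), p \in s -> separated_at f t.1 t.2.1 t.2.2 p.
  have [ps|] := boolP (p \in s); last by exists (i0, (i0, true)).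
  have [W [X [b sep]]] := intersection_point_separated p fam (hs p ps).1.
  by exists (W, (X, b)).
have [lab hlab] := choice label.
rewrite -sum1_size (partition_big (fun p => (lab p).2) predT) //=.
under eq_bigr do rewrite sum1_count.
apply: (@leq_trans (\sum_(c : 'I_n * bool) (k - 1))).
  apply: leq_sum => c _; apply: count_class_le k_gt0 us hlab _.
  by move=> p /hs[].
rewrite sum_nat_const card_prod card_ord card_bool.
lia.
Qed.
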